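(* Let $\mathcal X=\{1,\dots,N\}$ with $N\ge2$, let $0<\alpha<1$ and $0\le\varepsilon\le1-\frac1N$. Let $p,q$ be probability distributions on $\mathcal X$ with $p(x)>0$ for all $x$, let $u$ be the uniform distribution on $\mathcal X$, let $y\in\mathcal X$, and let $p'=U_{\alpha,\varepsilon}(p,y)$. Then \[ \log\frac1{p(y)}-\log\frac1{q(y)}\le \frac1{\log\frac1\alpha}\Big[D(q\parallel p)-D(q\parallel p')+\log\frac1{1-\varepsilon}\Big]+N\Big[D(u\parallel p)-D(u\parallel p')+\log\frac1{(1-\varepsilon)\alpha}\Big]. \]
   Context: All logarithms are natural, with $\log\frac10=+\infty$. For a distribution $p$ on $\mathcal X$, a letter $y$, $0<\alpha<1$ and $0\le\varepsilon\le1-\frac1N$, the update $U_{\alpha,\varepsilon}(p,y)$ is the distribution $p'$ with $p'(x)=\alpha p(x)+(1-\alpha)(1-\varepsilon)$ if $x=y$ and $p'(x)=\alpha p(x)+(1-\alpha)\frac{\varepsilon}{N-1}$ if $x\neq y$. For distributions $q,r$ with $r(x)>0$ for all $x$, $D(q\parallel r)=\sum_{x:\,q(x)>0}q(x)\log\frac{q(x)}{r(x)}$. *)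

(* Alphabet X = 'I_N (i.e. {0,...,N-1},
   a relabelling of {1,...,N}); reals R : realType; natural log = ln. *)
From mathcomp Require Import all_boot all_order all_algebra.
From mathcomp Require Import all_classical all_reals all_analysis.
Set Implicit Arguments. Unset Strict Implicit. Unset Printing Implicit Defensive.
Import Order.TTheory GRing.Theory Num.Theory.
Local Open Scope ring_scope.

Definition is_distr (R : realType) (N : nat) (p : 'I_N -> R) : Prop :=
  (forall x, 0 <= p x) /\ \sum_(x < N) p x = 1.

Definition upd (R : realType) (N : nat) (alpha eps : R) (p : 'I_N -> R) (y : 'I_N)
  : 'I_N -> R :=
  fun x => if x == y then alpha * p x + (1 - alpha) * (1 - eps)
           else alpha * p x + (1 - alpha) * (eps / (N.-1)%:R).

Definition unif (R : realType) (N : nat) : 'I_N -> R := fun _ => N%:R^-1.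

Definition KL (R : realType) (N : nat) (q r : 'I_N -> R) : R :=
  \sum_(x < N | 0 < q x) q x * ln (q x / r x).

Definition elog_inv (R : realType) (t : R) : \bar R :=
  if t == 0 then +oo%E else (ln (t^-1))%:E.

From mathcomp Require Import all_boot all_order all_algebra.
From mathcomp Require Import all_classical all_reals all_analysis.
From mathcomp Require Import ring lra.
Set Implicit Arguments. Unset Strict Implicit. Unset Printing Implicit Defensive.
Import Order.TTheory GRing.Theory Num.Theory.
Local Open Scope ring_scope.

(* Write p' for the update and K = ln (p'(y) / (alpha p(y))) > 0 ([gain] below). As
   p' >= alpha p pointwise, for every distribution w the drop D(w||p) - D(w||p') is at least
   w(y) K + ln alpha. Applied to q and to u, this bounds the two brackets of the
   right-hand side below by q(y) K / ln(1/alpha) - 1 and K + ln(1/(1-eps)).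
   Their sum dominates ln (q(y)/p(y)): by ln t <= t - 1 at t = q(y) K / ln(1/alpha)
   it remains to see ln (ln(1/alpha) (1-eps)) <= ln p(y) + K + ln K, which follows
   from alpha ln(1/alpha) <= 1 - alpha and
   (1-alpha)(1-eps) = p'(y) - alpha p(y) <= p'(y) K. *)

Lemma ln_le_subr1 (R : realType) (x : R) : 0 < x -> ln x <= x - 1.
Proof. by move=> x_gt0; have := @le_ln1Dx _ (x - 1); rewrite subrKC; apply; lra. Qed.

Lemma mulr_ln_inv_le (R : realType) (a : R) : 0 < a -> a * ln a^-1 <= 1 - a.
Proof.
move=> a_gt0; have ainv_gt0 : 0 < a^-1 by rewrite invr_gt0.
have := ler_wpM2l (ltW a_gt0) (ln_le_subr1 ainv_gt0).
by rewrite mulrBr mulr1 mulfV ?gt_eqF.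
Qed.

Lemma subr_le_mulr_ln_div (R : realType) (u m : R) :
  0 < u -> 0 < m -> m - u <= m * ln (m / u).
Proof.
move=> u_gt0 m_gt0; have := ln_le_subr1 (divr_gt0 u_gt0 m_gt0).
rewrite !ln_div ?posrE // => h.
have := ler_wpM2l (ltW m_gt0) h.
rewrite !mulrBr mulrCA mulfV ?gt_eqF // !mulr1; lra.
Qed.

Section RelativeEntropy.
Variables (R : realType) (N : nat).
Implicit Types (w r s : 'I_N -> R).

Lemma unif_distr : (0 < N)%N -> is_distr (@unif R N).
Proof.
move=> N_gt0; have N_neq0 : N%:R != 0 :> R by rewrite pnatr_eq0 -lt0n.
split=> [x|]; first by rewrite /unif invr_ge0 ler0n.
by rewrite /unif sumr_const card_ord -[_ *+ N]mulr_natr mulVf.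
Qed.

Lemma sum_distr_support w : is_distr w -> \sum_(x < N | 0 < w x) w x = 1.
Proof.
move=> [w_ge0 <-]; rewrite big_mkcond; apply: eq_bigr => x _.
by case: ltP => // w_le0; apply/eqP; rewrite eq_le w_le0 w_ge0.
Qed.

Lemma KL_subE w r s : (forall x, 0 < r x) -> (forall x, 0 < s x) ->
  KL w r - KL w s = \sum_(x < N | 0 < w x) w x * ln (s x / r x).
Proof.
move=> r_gt0 s_gt0; rewrite /KL -sumrB; apply: eq_bigr => x w_gt0.
rewrite -mulrBr !ln_div ?posrE //; congr (_ * _); lra.
Qed.

Lemma KL_sub_ge w r s (a : R) (y : 'I_N) :
  0 < a -> is_distr w -> 0 < w y -> (forall x, 0 < r x) ->
  (forall x, a * r x <= s x) ->
  w y * ln (s y / (a * r y)) + ln a <= KL w r - KL w s.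
Proof.
move=> a_gt0 w_distr wy_gt0 r_gt0 s_ge.
have ar_gt0 x : 0 < a * r x by rewrite mulr_gt0.
have s_gt0 x : 0 < s x by apply: lt_le_trans (s_ge x).
have ln_split x : ln (s x / r x) = ln (s x / (a * r x)) + ln a.
  by rewrite !ln_div ?posrE // lnM ?posrE //; lra.
have ln_ratio_ge0 x : 0 <= ln (s x / (a * r x)).
  by rewrite ln_ge0 // ler_pdivlMr // mul1r.
rewrite KL_subE //.
under eq_bigr => x _ do rewrite ln_split mulrDr.
rewrite big_split /= -mulr_suml sum_distr_support // mul1r lerD2r.
rewrite (bigD1 y) //= lerDl; apply: sumr_ge0 => x /andP[wx_gt0 _].
exact: mulr_ge0 (ltW wx_gt0) (ln_ratio_ge0 x).
Qed.

End RelativeEntropy.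

Section Update.
Variables (R : realType) (N : nat) (alpha eps : R) (p : 'I_N -> R) (y : 'I_N).
Hypotheses (alpha_gt0 : 0 < alpha) (alpha_lt1 : alpha < 1).
Hypotheses (eps_ge0 : 0 <= eps) (eps_lt1 : eps < 1) (p_gt0 : forall x, 0 < p x).

Let p' := upd alpha eps p y.
Let gain := ln (p' y / (alpha * p y)).
Let ln_inv_alpha := ln alpha^-1.

Lemma upd_ge x : alpha * p x <= p' x.
Proof.
rewrite /p' /upd; case: eqP => _;
  by rewrite lerDl mulr_ge0 ?divr_ge0 ?ler0n // subr_ge0 ltW.
Qed.

Lemma upd_gain_ge : (1 - alpha) * (1 - eps) <= p' y * gain.
Proof.
have ap_gt0 : 0 < alpha * p y by rewrite mulr_gt0.
have p'_gt0 : 0 < p' y by apply: lt_le_trans (upd_ge y).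
apply: le_trans (subr_le_mulr_ln_div ap_gt0 p'_gt0).
by rewrite /p' /upd eqxx addrAC subrr add0r.
Qed.

Lemma gain_gt0 : 0 < gain.
Proof.
have p'_gt0 : 0 < p' y by apply: lt_le_trans (upd_ge y); rewrite mulr_gt0.
rewrite -(pmulr_rgt0 _ p'_gt0); apply: lt_le_trans upd_gain_ge.
by rewrite mulr_gt0 ?subr_gt0.
Qed.

Lemma ln_inv_alpha_gt0 : 0 < ln_inv_alpha.
Proof. by rewrite ln_gt0 // invf_gt1. Qed.

Lemma ln_gain_ge : ln (ln_inv_alpha * (1 - eps)) <= ln (p y) + gain + ln gain.
Proof.
have p'_gt0 : 0 < p' y by apply: lt_le_trans (upd_ge y); rewrite mulr_gt0.
have ln_p'y : ln (p' y) = gain + ln alpha + ln (p y).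
  by rewrite /gain ln_div ?posrE ?mulr_gt0 // lnM ?posrE //; lra.
have : ln (alpha * (ln_inv_alpha * (1 - eps))) <= ln (p' y * gain).
  rewrite ler_ln ?posrE ?mulr_gt0 ?gain_gt0 ?ln_inv_alpha_gt0 ?subr_gt0 //.
  apply: le_trans upd_gain_ge; rewrite mulrA; apply: ler_wpM2r.
  - by rewrite subr_ge0 ltW.
  - exact: mulr_ln_inv_le.
rewrite !lnM ?posrE ?mulr_gt0 ?gain_gt0 ?ln_inv_alpha_gt0 ?subr_gt0 // ln_p'y; lra.
Qed.

Lemma ln_ratio_le (Q : R) : 0 < Q ->
  ln Q - ln (p y) <= Q * gain / ln_inv_alpha - 1 + (gain + ln (1 - eps)^-1).
Proof.
move=> Q_gt0.
have t_gt0 : 0 < Q * gain / ln_inv_alpha.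
  by rewrite divr_gt0 ?mulr_gt0 ?gain_gt0 ?ln_inv_alpha_gt0.
have := ln_le_subr1 t_gt0.
rewrite ln_div ?posrE ?mulr_gt0 ?gain_gt0 ?ln_inv_alpha_gt0 // lnM ?posrE ?gain_gt0 //.
have := ln_gain_ge.
rewrite lnM ?posrE ?ln_inv_alpha_gt0 ?subr_gt0 // lnV ?posrE ?subr_gt0 //; lra.
Qed.

Lemma ln_inv_onem_ge0 : 0 <= ln (1 - eps)^-1.
Proof. by rewrite ln_ge0 // invf_ge1 ?subr_gt0 // gerBl. Qed.

Lemma KL_sub_upd_ge (q : 'I_N -> R) : is_distr q -> 0 < q y ->
  q y * gain / ln_inv_alpha - 1 <= ln_inv_alpha^-1 * (KL q p - KL q p' + ln (1 - eps)^-1).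
Proof.
move=> q_distr qy_gt0.
have D_ge : q y * gain + ln alpha <= KL q p - KL q p' :=
  KL_sub_ge alpha_gt0 q_distr qy_gt0 p_gt0 upd_ge.
have ln_alpha : ln alpha = - ln_inv_alpha by rewrite /ln_inv_alpha lnV ?posrE ?opprK.
have l_ge0 := ln_inv_onem_ge0.
have -> : q y * gain / ln_inv_alpha - 1 = ln_inv_alpha^-1 * (q y * gain - ln_inv_alpha).
  by field; rewrite gt_eqF ?ln_inv_alpha_gt0.
rewrite ler_pM2l ?invr_gt0 ?ln_inv_alpha_gt0 //; lra.
Qed.

Lemma KL_unif_sub_upd_ge : (0 < N)%N ->
  gain + ln (1 - eps)^-1 <=
  N%:R * (KL (@unif R N) p - KL (@unif R N) p' + ln ((1 - eps) * alpha)^-1).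
Proof.
move=> N_gt0.
have N_ge1 : 1 <= N%:R :> R by rewrite ler1n.
have N_neq0 : N%:R != 0 :> R by rewrite pnatr_eq0 -lt0n.
have uy_gt0 : 0 < @unif R N y by rewrite invr_gt0 ltr0n.
have D_ge : N%:R^-1 * gain + ln alpha <= KL (@unif R N) p - KL (@unif R N) p' :=
  KL_sub_ge alpha_gt0 (@unif_distr R N N_gt0) uy_gt0 p_gt0 upd_ge.
have ln_alpha : ln alpha = - ln_inv_alpha by rewrite /ln_inv_alpha lnV ?posrE ?opprK.
have l_ge0 := ln_inv_onem_ge0.
rewrite invfM lnM ?posrE ?invr_gt0 ?subr_gt0 // -/ln_inv_alpha.
rewrite -{1}(mulVKf N_neq0 gain); nra.
Qed.

End Update.

Theorem lemma2 (R : realType) (N : nat) (alpha eps : R) (p q : 'I_N -> R) (y : 'I_N) :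
  (2 <= N)%N ->
  0 < alpha -> alpha < 1 ->
  0 <= eps -> eps <= 1 - N%:R^-1 ->
  is_distr p -> is_distr q -> (forall x, 0 < p x) ->
  (elog_inv (p y) - elog_inv (q y) <=
   ((ln (alpha^-1))^-1 * (KL q p - KL q (upd alpha eps p y) + ln ((1 - eps)^-1))
    + N%:R * (KL (@unif R N) p - KL (@unif R N) (upd alpha eps p y)
              + ln (((1 - eps) * alpha)^-1)))%:E)%E.
Proof.
move=> N_ge2 alpha_gt0 alpha_lt1 eps_ge0 eps_le _ q_distr p_gt0.
have N_gt0 : (0 < N)%N by apply: leq_trans N_ge2.
have eps_lt1 : eps < 1.
  by apply: le_lt_trans eps_le _; rewrite gtrBl invr_gt0 ltr0n.
rewrite /elog_inv gt_eqF //.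
have [qy_gt0 | qy_le0] := ltP 0 (q y); last first.
  have -> : q y = 0 by apply/eqP; rewrite eq_le qy_le0 q_distr.1.
  by rewrite eqxx /= leNye.
rewrite gt_eqF // lee_fin (lnV (p_gt0 y)) (lnV qy_gt0) opprK addrC.
have ratio := ln_ratio_le y alpha_gt0 alpha_lt1 eps_ge0 eps_lt1 p_gt0 qy_gt0.
have term_q := KL_sub_upd_ge alpha_gt0 alpha_lt1 eps_ge0 eps_lt1 p_gt0 q_distr qy_gt0.
have term_u := KL_unif_sub_upd_ge y alpha_gt0 alpha_lt1 eps_ge0 eps_lt1 p_gt0 N_gt0.
exact: le_trans ratio (lerD term_q term_u).
Qed.
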